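(* Let $S$ be an $\omega$-cocontinuous $M$-module. For all $M$-wGCL programs $C$, the transformer $\mathsf{wlp}[C]$ is a well-defined $\omega$-cocontinuous endofunction on the module of weightings over $S$. In particular, if $\Phi_f$ is the $\mathsf{wlp}$-characteristic function of $\mathtt{while}(\varphi)\{C\}$ with respect to postweighting $f$, i.e.\ $\Phi_f(X) = [\neg\varphi]\cdot f \oplus [\varphi]\cdot \mathsf{wlp}[C](X)$, then \[ \mathsf{wlp}[\mathtt{while}(\varphi)\{C\}](f) \;=\; \bigwedge_{i \in \mathbb{N}} \Phi_f^i(\top), \] where $\bigwedge$ denotes the infimum (meet) with respect to the natural order and $\top$ is the greatest element of the module of weightings.
   Context: $M=(M,\odot,1)$ is a monoid of weights. An $M$-module $S$ is a commutative monoid $(S,\oplus,\mathbf{0})$ with an associative, distributive left action (scalar multiplication) $\otimes\colon M\times S\to S$ such that $1\otimes a=a$ and $v\otimes\mathbf{0}=\mathbf{0}$. The natural order is $a\preceq b$ iff $\exists c:\ a\oplus c=b$. $S$ is $\omega$-cocontinuous if the reversed natural order is a pointed $\omega$-cpo (so a greatest element $\top$ exists and infima of decreasing chains exist) and $\oplus$, $\otimes$ are $\omega$-continuous with respect to it. Weightings are functions $f\colon\Sigma\to S$ from program states to $S$, with operations, order, $\top$ and meets lifted pointwise. wGCL programs are built from assignments $x:=E$, sequential composition $C_1;C_2$, conditionals $\mathtt{if}(\varphi)\{C_1\}\mathtt{else}\{C_2\}$, branching $\{C_1\}\oplus\{C_2\}$, weighting statements $\odot a$ with $a\in M$, and loops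 $\mathtt{while}(\varphi)\{C\}$. For a predicate $\varphi$, $([\varphi]\cdot f)(\sigma)=f(\sigma)$ if $\sigma\models\varphi$ and $\mathbf{0}$ otherwise. The weakest liberal preweighting transformer $\mathsf{wlp}$ is defined inductively: $\mathsf{wlp}[x:=E](f)=f[x/E]$; $\mathsf{wlp}[C_1;C_2](f)=\mathsf{wlp}[C_1](\mathsf{wlp}[C_2](f))$; $\mathsf{wlp}[\mathtt{if}(\varphi)\{C_1\}\mathtt{else}\{C_2\}](f)=[\varphi]\cdot\mathsf{wlp}[C_1](f)\oplus[\neg\varphi]\cdot\mathsf{wlp}[C_2](f)$; $\mathsf{wlp}[\{C_1\}\oplus\{C_2\}](f)=\mathsf{wlp}[C_1](f)\oplus\mathsf{wlp}[C_2](f)$; $\mathsf{wlp}[\odot a](f)=a\otimes f$; and $\mathsf{wlp}[\mathtt{while}(\varphi)\{C\}](f)$ is the greatest fixed point of $\Phi_f$. *)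

From Stdlib Require Import ClassicalEpsilon.

Set Implicit Arguments.

Record monoid := Monoid {
  mcar :> Type;
  mop : mcar -> mcar -> mcar;
  mone : mcar;
  mop_assoc : forall a b c, mop a (mop b c) = mop (mop a b) c;
  mop_1l : forall a, mop mone a = a;
  mop_1r : forall a, mop a mone = a
}.

Record module (M : monoid) := Module {
  scar :> Type;
  splus : scar -> scar -> scar;
  szero : scar;
  splus_assoc : forall a b c, splus a (splus b c) = splus (splus a b) c;
  splus_comm : forall a b, splus a b = splus b a;
  splus_0l : forall a, splus szero a = a;
  act : mcar M -> scar -> scar;
  act_assoc : forall (u v : mcar M) a, act (mop M u v) a = act u (act v a);
  act_distr : forall (v : mcar M) a b, act v (splus a b) = splus (act v a) (act v b);
  act_1 : forall a, act (mone M) a = a;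
  act_0 : forall v : mcar M, act v szero = szero
}.

Arguments splus {M} m _ _.
Arguments szero {M} m.
Arguments act {M} m _ _.

Section Order.
Variables (M : monoid) (Sm : module M).

Definition nle (a b : Sm) : Prop := exists c, splus Sm a c = b.

Definition ndecreasing (ch : nat -> Sm) : Prop := forall i, nle (ch (Datatypes.S i)) (ch i).

Definition is_inf (ch : nat -> Sm) (l : Sm) : Prop :=
  (forall i, nle l (ch i)) /\ (forall m, (forall i, nle m (ch i)) -> nle m l).

(** ω-cocontinuity: the reversed natural order is a pointed ω-cpo
    (partial order with greatest element and infima of decreasing chains),
    and ⊕, ⊗ are ω-continuous w.r.t. it. *)
Definition omega_cocontinuous_module : Prop :=
  (forall a, nle a a) /\
  (forall a b c, nle a b -> nle b c -> nle a c) /\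
  (forall a b, nle a b -> nle b a -> a = b) /\
  (exists top : Sm, forall a, nle a top) /\
  (forall ch, ndecreasing ch -> exists l, is_inf ch l) /\
  (forall cha chb la lb, ndecreasing cha -> ndecreasing chb ->
      is_inf cha la -> is_inf chb lb ->
      is_inf (fun i => splus Sm (cha i) (chb i)) (splus Sm la lb)) /\
  (forall (v : mcar M) ch l, ndecreasing ch -> is_inf ch l ->
      is_inf (fun i => act Sm v (ch i)) (act Sm v l)).
End Order.

Definition state (V : Type) := nat -> V.

Definition upd (V : Type) (s : state V) (x : nat) (v : V) : state V :=
  fun y => if Nat.eqb y x then v else s y.

Inductive wgcl (M : monoid) (V : Type) : Type :=
| Assign : nat -> (state V -> V) -> wgcl M V
| Seq : wgcl M V -> wgcl M V -> wgcl M V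
| Ite : (state V -> bool) -> wgcl M V -> wgcl M V -> wgcl M V
| Branch : wgcl M V -> wgcl M V -> wgcl M V
| Weight : mcar M -> wgcl M V
| While : (state V -> bool) -> wgcl M V -> wgcl M V.

Arguments Assign {M V} _ _.
Arguments Seq {M V} _ _.
Arguments Ite {M V} _ _ _.
Arguments Branch {M V} _ _.
Arguments Weight {M V} _.
Arguments While {M V} _ _.

Section Weightings.
Variables (M : monoid) (V : Type) (Sm : module M).

Definition weighting := state V -> Sm.

Definition wle (f g : weighting) : Prop := forall s, nle Sm (f s) (g s).
Definition wdecreasing (ch : nat -> weighting) : Prop := forall i, wle (ch (Datatypes.S i)) (ch i).
Definition wis_inf (ch : nat -> weighting) (l : weighting) : Prop :=
  forall s, is_inf Sm (fun i => ch i s) (l s).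

Definition w_cocontinuous (F : weighting -> weighting) : Prop :=
  forall ch l, wdecreasing ch -> wis_inf ch l -> wis_inf (fun i => F (ch i)) (F l).

Definition iverson (phi : state V -> bool) (f : weighting) : weighting :=
  fun s => if phi s then f s else szero Sm.

Definition wplus (f g : weighting) : weighting := fun s => splus Sm (f s) (g s).

Definition is_gfp (F : weighting -> weighting) (g : weighting) : Prop :=
  F g = g /\ (forall h, F h = h -> wle h g).

(** The greatest fixed point, chosen classically if it exists. *)
Definition gfp (F : weighting -> weighting) : weighting :=
  epsilon (inhabits (fun _ => szero Sm)) (is_gfp F).

Definition charfun (phi : state V -> bool) (body : weighting -> weighting)
  (f : weighting) (X : weighting) : weighting :=
  wplus (iverson (fun s => negb (phi s)) f) (iverson phi (body X)).

Fixpoint wlp (C : wgcl M V) (f : weighting) {struct C} : weighting :=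
  match C with
  | Assign x E => fun s => f (upd s x (E s))
  | Seq C1 C2 => wlp C1 (wlp C2 f)
  | Ite phi C1 C2 => wplus (iverson phi (wlp C1 f))
                           (iverson (fun s => negb (phi s)) (wlp C2 f))
  | Branch C1 C2 => wplus (wlp C1 f) (wlp C2 f)
  | Weight a => fun s => act Sm a (f s)
  | While phi C' => gfp (charfun phi (wlp C') f)
  end.

Fixpoint iter (n : nat) (F : weighting -> weighting) (x : weighting) : weighting :=
  match n with O => x | Datatypes.S k => F (iter k F x) end.
End Weightings.

Arguments wlp {M V} Sm C f.
Arguments weighting {M} V Sm.
Arguments charfun {M V Sm} phi body f X.
Arguments iter {M V Sm} n F x.
Arguments is_gfp {M V Sm} F g.
Arguments wis_inf {M V Sm} ch l.
Arguments w_cocontinuous {M V Sm} F.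
Arguments nle {M} Sm a b.

(* Every wlp-transformer is assembled from operations that preserve infima of
   decreasing chains (substitution, the action, Iverson brackets, [⊕],
   composition), so the only real case is the loop.  There, by the dual of
   Kleene's theorem, the infimum of the decreasing chain [Φ_f^n(⊤)] is a fixed
   point of the cocontinuous map [Φ_f] lying above every fixed point, hence is
   its greatest fixed point.  Since [Φ_f^n(⊤)] is cocontinuous in [f] for each
   [n], cocontinuity of [f ↦ gfp Φ_f] follows by exchanging two infima. *)
From Stdlib Require Import ClassicalEpsilon FunctionalExtensionality.

Set Implicit Arguments.

Section Wlp.
Variables (M : monoid) (V : Type) (S : module M).

Notation W := (weighting V S).

Lemma splus_nle_mono (a b c d : S) :
  nle S a b -> nle S c d -> nle S (splus S a c) (splus S b d).
Proof.
  intros [x <-] [y <-]; exists (splus S x y).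
  rewrite <- !splus_assoc; f_equal.
  rewrite (splus_comm _ c), <- splus_assoc; f_equal.
  apply splus_comm.
Qed.

Lemma iverson_mono phi (f g : W) : wle f g -> wle (iverson phi f) (iverson phi g).
Proof.
  intros Hfg s; unfold iverson; destruct (phi s); [apply Hfg | exists (szero S); apply splus_0l].
Qed.

Lemma wplus_mono (f g f' g' : W) : wle f g -> wle f' g' -> wle (wplus f f') (wplus g g').
Proof. intros Hf Hf' s; apply splus_nle_mono; auto. Qed.

Hypothesis HS : omega_cocontinuous_module S.

Lemma nle_refl (a : S) : nle S a a.
Proof. destruct HS as (refl & _); apply refl. Qed.

Lemma nle_trans (a b c : S) : nle S a b -> nle S b c -> nle S a c.
Proof. destruct HS as (_ & trans & _); apply trans. Qed.

Lemma nle_antisym (a b : S) : nle S a b -> nle S b a -> a = b.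
Proof. destruct HS as (_ & _ & antisym & _); apply antisym. Qed.

Lemma top_exists : exists top : S, forall a, nle S a top.
Proof. destruct HS as (_ & _ & _ & Htop & _); exact Htop. Qed.

Lemma inf_exists (ch : nat -> S) : ndecreasing S ch -> exists l, is_inf S ch l.
Proof. destruct HS as (_ & _ & _ & _ & Hinf & _); apply Hinf. Qed.

Lemma splus_inf (cha chb : nat -> S) la lb :
  ndecreasing S cha -> ndecreasing S chb -> is_inf S cha la -> is_inf S chb lb ->
  is_inf S (fun i => splus S (cha i) (chb i)) (splus S la lb).
Proof. destruct HS as (_ & _ & _ & _ & _ & Hplus & _); apply Hplus. Qed.

Lemma act_inf (v : M) (ch : nat -> S) l :
  ndecreasing S ch -> is_inf S ch l -> is_inf S (fun i => act S v (ch i)) (act S v l).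
Proof. destruct HS as (_ & _ & _ & _ & _ & _ & Hact); apply Hact. Qed.

Lemma is_inf_unique (ch : nat -> S) l1 l2 : is_inf S ch l1 -> is_inf S ch l2 -> l1 = l2.
Proof. intros [low1 great1] [low2 great2]; apply nle_antisym; auto. Qed.

Lemma is_inf_const (a : S) : is_inf S (fun _ => a) a.
Proof. split; [intros _; apply nle_refl | intros m Hm; apply (Hm 0)]. Qed.

Lemma is_inf_shift (ch : nat -> S) l :
  ndecreasing S ch -> is_inf S ch l -> is_inf S (fun i => ch (Datatypes.S i)) l.
Proof.
  intros Hdec [low great]; split; [intro i; apply low |].
  intros m Hm; apply great; intros [| i]; [| apply Hm].
  apply nle_trans with (ch 1); [apply Hm | apply Hdec].
Qed.

Lemma is_inf_exchange (x : nat -> nat -> S) (a b : nat -> S) l :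
  (forall i, is_inf S (x i) (a i)) -> (forall n, is_inf S (fun i => x i n) (b n)) ->
  is_inf S b l -> is_inf S a l.
Proof.
  intros Ha Hb [low great]; split.
  - intro i; apply (proj2 (Ha i)); intro n.
    apply nle_trans with (b n); [apply low | apply (proj1 (Hb n))].
  - intros m Hm; apply great; intro n; apply (proj2 (Hb n)); intro i.
    apply nle_trans with (a i); [apply Hm | apply (proj1 (Ha i))].
Qed.

Lemma wle_refl (f : W) : wle f f.
Proof. intro s; apply nle_refl. Qed.

Lemma wle_antisym (f g : W) : wle f g -> wle g f -> f = g.
Proof. intros Hfg Hgf; apply functional_extensionality; intro s; apply nle_antisym; auto. Qed.

Lemma wis_inf_exists (ch : nat -> W) : wdecreasing ch -> exists l, wis_inf ch l.
Proof.
  intro Hdec.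
  assert (Hs : forall s, exists l, is_inf S (fun i => ch i s) l)
    by (intro s; apply inf_exists; intro i; apply Hdec).
  exists (fun s => proj1_sig (constructive_indefinite_description _ (Hs s))).
  intro s; exact (proj2_sig (constructive_indefinite_description _ (Hs s))).
Qed.

Lemma gfp_unique (F : W -> W) g : is_gfp F g -> gfp F = g.
Proof.
  intro Hg.
  assert (Hgfp : is_gfp F (gfp F)) by (unfold gfp; apply epsilon_spec; exists g; exact Hg).
  apply wle_antisym; [apply Hg, Hgfp | apply Hgfp, Hg].
Qed.

Lemma iverson_inf phi (ch : nat -> W) l :
  wis_inf ch l -> wis_inf (fun i => iverson phi (ch i)) (iverson phi l).
Proof. intros Hl s; unfold iverson; destruct (phi s); [apply Hl | apply is_inf_const]. Qed.

Lemma wplus_inf (cha chb : nat -> W) la lb :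
  wdecreasing cha -> wdecreasing chb -> wis_inf cha la -> wis_inf chb lb ->
  wis_inf (fun i => wplus (cha i) (chb i)) (wplus la lb).
Proof.
  intros Ha Hb Hla Hlb s; apply splus_inf; auto; intro i; [apply Ha | apply Hb].
Qed.

Lemma w_cocontinuous_mono (F : W -> W) f g :
  w_cocontinuous F -> wle f g -> wle (F f) (F g).
Proof.
  intros HF Hfg.
  pose (ch := fun i : nat => match i with 0 => g | _ => f end).
  assert (Hdec : wdecreasing ch)
    by (intros [|] s; [apply Hfg | apply nle_refl]).
  assert (Hinf : wis_inf ch f).
  { intro s; split; [intros [|] ; [apply Hfg | apply nle_refl] | intros m Hm; apply (Hm 1)]. }
  intro s; apply (proj1 (HF ch f Hdec Hinf s) 0).
Qed.

Lemma w_cocontinuous_decreasing (F : W -> W) (ch : nat -> W) :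
  w_cocontinuous F -> wdecreasing ch -> wdecreasing (fun i => F (ch i)).
Proof. intros HF Hdec i; apply w_cocontinuous_mono; auto. Qed.

Lemma w_cocontinuous_precomp (r : state V -> state V) :
  w_cocontinuous (fun f : W => fun s => f (r s)).
Proof. intros ch l _ Hl s; apply Hl. Qed.

Lemma w_cocontinuous_act (v : M) : w_cocontinuous (fun f : W => fun s => act S v (f s)).
Proof. intros ch l Hdec Hl s; apply act_inf; [intro i; apply Hdec | apply Hl]. Qed.

Lemma w_cocontinuous_comp (F G : W -> W) :
  w_cocontinuous F -> w_cocontinuous G -> w_cocontinuous (fun f => F (G f)).
Proof. intros HF HG ch l Hdec Hl; apply HF; [apply w_cocontinuous_decreasing |]; auto. Qed.

Lemma w_cocontinuous_iverson phi (F : W -> W) :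
  w_cocontinuous F -> w_cocontinuous (fun f => iverson phi (F f)).
Proof. intros HF ch l Hdec Hl; apply iverson_inf, HF; auto. Qed.

Lemma w_cocontinuous_wplus (F G : W -> W) :
  w_cocontinuous F -> w_cocontinuous G -> w_cocontinuous (fun f => wplus (F f) (G f)).
Proof.
  intros HF HG ch l Hdec Hl.
  apply wplus_inf; auto; apply w_cocontinuous_decreasing; auto.
Qed.

Section Loop.
Variables (phi : state V -> bool) (B : W -> W).
Hypothesis HB : w_cocontinuous B.

Notation Phi := (charfun phi B).

Lemma charfun_mono f f' X X' : wle f f' -> wle X X' -> wle (Phi f X) (Phi f' X').
Proof.
  intros Hf HX; apply wplus_mono; apply iverson_mono; auto.
  apply w_cocontinuous_mono; auto.
Qed.

Lemma charfun_inf (fs Xs : nat -> W) f X :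
  wdecreasing fs -> wis_inf fs f -> wdecreasing Xs -> wis_inf Xs X ->
  wis_inf (fun i => Phi (fs i) (Xs i)) (Phi f X).
Proof.
  intros Hfs Hf HXs HX; apply wplus_inf; try (apply iverson_inf; auto).
  - intro i; apply iverson_mono, Hfs.
  - intro i; apply iverson_mono, w_cocontinuous_mono; auto.
Qed.

Section Kleene.
Variable top : S.
Hypothesis top_greatest : forall a : S, nle S a top.

Definition kleene (f : W) (n : nat) : W := iter n (Phi f) (fun _ => top).

Lemma kleene_decreasing f : wdecreasing (kleene f).
Proof.
  intro n; induction n as [| n IH]; [intro s; apply top_greatest |].
  apply charfun_mono; [apply wle_refl | exact IH].
Qed.

Lemma kleene_mono f f' n : wle f f' -> wle (kleene f n) (kleene f' n).
Proof.
  intro Hf; induction n as [| n IH]; [apply wle_refl | apply charfun_mono; auto].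
Qed.

Lemma kleene_inf_is_gfp f L : wis_inf (kleene f) L -> is_gfp (Phi f) L.
Proof.
  intro HL; split.
  - apply functional_extensionality; intro s.
    apply is_inf_unique with (fun n => kleene f (Datatypes.S n) s).
    + apply (charfun_inf (fs := fun _ => f) (Xs := kleene f)); auto using kleene_decreasing.
      * intros i t; apply nle_refl.
      * intro t; apply is_inf_const.
    + apply (is_inf_shift (ch := fun n => kleene f n s)); [intro n; apply kleene_decreasing | apply HL].
  - intros h Hh.
    assert (Hbelow : forall n, wle h (kleene f n)).
    { induction n as [| n IH]; [intro s; apply top_greatest |].
      rewrite <- Hh; apply charfun_mono; [apply wle_refl | exact IH]. }
    intro s; apply (HL s); intro n; apply Hbelow.
Qed.

Lemma gfp_charfun_kleene f : wis_inf (kleene f) (gfp (Phi f)).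
Proof.
  destruct (wis_inf_exists (kleene_decreasing f)) as [L HL].
  rewrite (gfp_unique (kleene_inf_is_gfp HL)); exact HL.
Qed.

Lemma kleene_inf (fs : nat -> W) f n :
  wdecreasing fs -> wis_inf fs f -> wis_inf (fun i => kleene (fs i) n) (kleene f n).
Proof.
  intros Hfs Hf; induction n as [| n IH]; [intro s; apply is_inf_const |].
  apply charfun_inf; auto.
  intro i; apply kleene_mono, Hfs.
Qed.

End Kleene.

Lemma gfp_charfun_is_gfp f : is_gfp (Phi f) (gfp (Phi f)).
Proof.
  destruct top_exists as [top Htop].
  apply (kleene_inf_is_gfp Htop), (gfp_charfun_kleene Htop).
Qed.

Lemma w_cocontinuous_gfp_charfun : w_cocontinuous (fun f => gfp (Phi f)).
Proof.
  destruct top_exists as [top Htop].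
  intros fs f Hfs Hf s.
  apply is_inf_exchange with (fun i n => kleene top (fs i) n s) (fun n => kleene top f n s).
  - intro i; apply (gfp_charfun_kleene Htop).
  - intro n; apply kleene_inf; auto.
  - apply (gfp_charfun_kleene Htop).
Qed.

End Loop.

Lemma wlp_cocontinuous (C : wgcl M V) : w_cocontinuous (wlp S C).
Proof.
  induction C; simpl.
  - apply w_cocontinuous_precomp.
  - apply w_cocontinuous_comp; assumption.
  - apply w_cocontinuous_wplus; apply w_cocontinuous_iverson; assumption.
  - apply w_cocontinuous_wplus; assumption.
  - apply w_cocontinuous_act.
  - apply w_cocontinuous_gfp_charfun; assumption.
Qed.

End Wlp.

Theorem mainTheorem4 (M : monoid) (V : Type) (S : module M)
  (HS : omega_cocontinuous_module S) :
  (forall C : wgcl M V, w_cocontinuous (wlp S C)) /\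
  (forall (phi : state V -> bool) (C : wgcl M V) (f : weighting V S),
     is_gfp (charfun phi (wlp S C) f) (wlp S (While phi C) f) /\
     (forall top : S, (forall a : S, nle S a top) ->
        wis_inf (fun i => iter i (charfun phi (wlp S C) f) (fun _ => top))
                (wlp S (While phi C) f))).
Proof.
  split; [exact (wlp_cocontinuous HS) |].
  intros phi C f.
  pose proof (wlp_cocontinuous HS C) as HC.
  split.
  - exact (gfp_charfun_is_gfp HS phi HC f).
  - intros top Htop; exact (gfp_charfun_kleene HS phi HC Htop f).
Qed.
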